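(* Let $X$ be a vector space, let $p:X\to\mathbb{R}$ be a sub-additive functional (i.e., $p(x+y)\le p(x)+p(y)$ for all $x,y\in X$), let $S$ be a proper subset of $X$, and let $F:S\to\mathbb{R}$ satisfy $F(s_1)+F(s_2)\le p(s_1+s_2)$ for all $s_1,s_2\in S$ with $s_1\neq s_2$. Then $F$ has an extension $\hat F:X\to\mathbb{R}$ with $\hat F(s)=F(s)$ for all $s\in S$ and $\hat F(x_1)+\hat F(x_2)\le p(x_1+x_2)$ for all $x_1,x_2\in X$ with $x_1\neq x_2$.
   Context: $X$ is a vector space over $K$, where $K$ is $\mathbb{R}$ or $\mathbb{C}$. *)

From HB Require Import structures.
From mathcomp Require Import all_boot all_order all_algebra.
From mathcomp Require Import boolp classical_sets reals.
Set Implicit Arguments. Unset Strict Implicit. Unset Printing Implicit Defensive.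
Import Order.TTheory GRing.Theory Num.Theory.
Local Open Scope ring_scope.

Definition subadditive (R : realType) (K : fieldType) (X : lmodType K)
  (p : X -> R) : Prop :=
  forall x y : X, p (x + y) <= p x + p y.

From HB Require Import structures.
From mathcomp Require Import all_boot all_order all_algebra.
From mathcomp Require Import boolp classical_sets reals.
From mathcomp Require Import lra.
Set Implicit Arguments. Unset Strict Implicit. Unset Printing Implicit Defensive.
Import Order.TTheory GRing.Theory Num.Theory.
Local Open Scope classical_set_scope.
Local Open Scope ring_scope.

(* Fix s0 in S (any point if S is empty) and set, outside S,
     Fh x := min (F s0 - p (s0 - x), p (s0 + x) - F s0, - p (- x)).
   The second bound handles the pair (s0, x); for s <> s0 in S the first one gives
   F s + Fh x <= p (s + s0) - p (s0 - x) <= p (s + x); for two points outside S the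
   third one gives Fh x1 + Fh x2 <= - p (- x1) - p (- x2) <= p (x1 + x2). *)

Section Extension.

Variables (R : realType) (K : fieldType) (X : lmodType K) (p : X -> R).
Hypothesis p_sub : subadditive p.

Lemma oppNp_add_le (x1 x2 : X) : - p (- x1) - p (- x2) <= p (x1 + x2).
Proof.
have p0_ge0 := p_sub 0 0; rewrite addr0 in p0_ge0.
have p_split := p_sub (x1 + x2) (- (x1 + x2)); rewrite subrr in p_split.
have p_opp := p_sub (- x1) (- x2); rewrite -opprD in p_opp.
lra.
Qed.

Variables (S : set X) (F : X -> R) (s0 : X).
Hypothesis F_pairwise :
  forall s1 s2, S s1 -> S s2 -> s1 != s2 -> F s1 + F s2 <= p (s1 + s2).
Hypothesis F_s0 : forall s, S s -> s != s0 -> F s + F s0 <= p (s + s0).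

Definition ext_out (x : X) : R :=
  Num.min (F s0 - p (s0 - x)) (Num.min (p (s0 + x) - F s0) (- p (- x))).

Lemma F_add_ext_out (s x : X) : S s -> F s + ext_out x <= p (s + x).
Proof.
move=> Ss; have [->|ne_s0] := eqVneq s s0.
  have le_out : ext_out x <= p (s0 + x) - F s0 by rewrite !ge_min lexx orbT.
  lra.
have le_out : ext_out x <= F s0 - p (s0 - x) by rewrite ge_min lexx.
have p_tri := p_sub (s + x) (s0 - x).
rewrite addrACA subrr addr0 in p_tri.
have := F_s0 Ss ne_s0; lra.
Qed.

Lemma ext_out_add_le (x1 x2 : X) : ext_out x1 + ext_out x2 <= p (x1 + x2).
Proof.
have le_opp x : ext_out x <= - p (- x) by rewrite !ge_min lexx !orbT.
exact: le_trans (lerD (le_opp x1) (le_opp x2)) (oppNp_add_le x1 x2).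
Qed.

Definition extension (x : X) : R := if x \in S then F x else ext_out x.

Lemma extension_eq (s : X) : S s -> extension s = F s.
Proof. by move=> Ss; rewrite /extension mem_set. Qed.

Lemma extension_pairwise (x1 x2 : X) :
  x1 != x2 -> extension x1 + extension x2 <= p (x1 + x2).
Proof.
move=> ne; rewrite /extension.
have [S1|S1] := pselect (S x1); [rewrite mem_set|rewrite memNset] => //;
  have [S2|S2] := pselect (S x2); rewrite ?(mem_set S2) ?(memNset S2).
- exact: F_pairwise.
- exact: F_add_ext_out.
- by rewrite addrC [x1 + _]addrC; apply: F_add_ext_out.
- exact: ext_out_add_le.
Qed.

End Extension.

Theorem theorem4 (R : realType) (K : fieldType) (X : lmodType K)
  (p : X -> R) (S : set X) (F : X -> R) :
  subadditive p ->
  S <> [set: X] ->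
  (forall s1 s2 : X, S s1 -> S s2 -> s1 != s2 -> F s1 + F s2 <= p (s1 + s2)) ->
  exists Fh : X -> R,
    (forall s : X, S s -> Fh s = F s) /\
    (forall x1 x2 : X, x1 != x2 -> Fh x1 + Fh x2 <= p (x1 + x2)).
Proof.
move=> p_sub _ F_pairwise.
have [s0 F_s0] : exists s0, forall s, S s -> s != s0 -> F s + F s0 <= p (s + s0).
  have [[s0 Ss0]|S0] := pselect (exists s, S s).
    by exists s0 => s Ss; apply: F_pairwise.
  by exists 0 => s Ss; case: S0; exists s.
exists (extension p S F s0); split; first exact: extension_eq.
exact: extension_pairwise.
Qed.
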